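(* Let ${\bf f}=(f_1,\dots,f_n)$ be a complete intersection (of $n$ quadrics in $n$ variables) with $k\le 2^n$ real points. Then (a) $\mathcal{R}^{lin}_{\bf f}$ consists of $k$ spectrahedral cones, each linearly isomorphic to the master spectrahedron $\mathrm{S}^{lin}_{\bf f}$; and (b) $\mathcal{R}^{ed}_{\bf f}$ consists of $k$ full-dimensional spectrahedra, each (affinely) isomorphic to the master spectrahedron $\mathrm{S}^{ed}_{\bf f}$.
   Context: Write $f_i(x)=x^TA_ix+2a_i^Tx+\alpha_i$ with $A_i$ real symmetric $n\times n$, $a_i\in\mathbb{R}^n$, $\alpha_i\in\mathbb{R}$; $V_{\bf f}\subset\mathbb{R}^n$ is the real zero set. Master spectrahedra: $\mathrm{S}^{lin}_{\bf f}=\{\lambda\in\mathbb{R}^n:\sum_i\lambda_iA_i\prec0\}$, $\mathrm{S}^{ed}_{\bf f}=\{\lambda\in\mathbb{R}^n:\sum_i\lambda_iA_i\prec I_n\}$. SDP-exact regions: $\mathcal{R}^{lin}_{\bf f}$ is the set of $u\in\mathbb{R}^n$ such that there exist $x\in V_{\bf f}$ and $\lambda\in\mathrm{S}^{lin}_{\bf f}$ with $u=\sum_i\lambda_i(a_i+A_ix)$; $\mathcal{R}^{ed}_{\bf f}$ is the set of $u\in\mathbb{R}^n$ such that there exist $x\in V_{\bf f}$ and $\lambda\in\mathrm{S}^{ed}_{\bf f}$ with $u=x-\sum_i\lambda_i(a_i+A_ix)$. (These are the SDP-exact regions, i.e. cost parameters for which the Shor relaxation of minimizing $u^Tx$, resp.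 $\|x-u\|^2$, over $V_{\bf f}$ is exact with strict complementarity.) *)

From HB Require Import structures.
From mathcomp Require Import all_boot all_order all_algebra.
From mathcomp Require Import reals.
From mathcomp Require Import complex.
Set Implicit Arguments. Unset Strict Implicit. Unset Printing Implicit Defensive.
Import Order.TTheory GRing.Theory Num.Theory.
Local Open Scope ring_scope.

Definition quad_eval (K : comNzRingType) (n : nat)
  (A : 'M[K]_n) (a : 'cV[K]_n) (alpha : K) (x : 'cV[K]_n) : K :=
  (x^T *m A *m x) ord0 ord0 + 2 * ((a^T *m x) ord0 ord0) + alpha.

Definition Vf (R : realType) (n : nat) (A : 'I_n -> 'M[R]_n) (a : 'I_n -> 'cV[R]_n)
  (alpha : 'I_n -> R) (x : 'cV[R]_n) : Prop :=
  forall i, quad_eval (A i) (a i) (alpha i) x = 0.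

Definition VfC (R : realType) (n : nat) (A : 'I_n -> 'M[R]_n) (a : 'I_n -> 'cV[R]_n)
  (alpha : 'I_n -> R) (z : 'cV[complex R]_n) : Prop :=
  forall i, quad_eval (map_mx (fun r : R => Complex r 0) (A i))
                      (map_mx (fun r : R => Complex r 0) (a i)) (Complex (alpha i) 0) z = 0.

(* (half) Jacobian matrix of f at z : row i is (A_i z + a_i)^T *)
Definition jacobian (K : comNzRingType) (n : nat) (A : 'I_n -> 'M[K]_n)
  (a : 'I_n -> 'cV[K]_n) (z : 'cV[K]_n) : 'M[K]_n :=
  \matrix_(i, j) (A i *m z + a i) j ord0.

(* f is a complete intersection: the complex variety V_C(f) is finite
   (zero-dimensional) and reduced, i.e. the Jacobian is nonsingular at every
   complex zero. *)
Definition complete_intersection (R : realType) (n : nat) (A : 'I_n -> 'M[R]_n)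
  (a : 'I_n -> 'cV[R]_n) (alpha : 'I_n -> R) : Prop :=
  (exists s : seq 'cV[complex R]_n, forall z, VfC A a alpha z -> z \in s) /\
  (forall z, VfC A a alpha z ->
     \det (jacobian (fun i => map_mx (fun r : R => Complex r 0) (A i))
                    (fun i => map_mx (fun r : R => Complex r 0) (a i)) z) != 0).


Definition posdef (R : realType) (m : nat) (M : 'M[R]_m) : Prop :=
  (M \is symmetricmx) /\ forall v : 'cV[R]_m, v != 0 -> 0 < (v^T *m M *m v) ord0 ord0.

Definition Slin (R : realType) (n : nat) (A : 'I_n -> 'M[R]_n) (l : 'cV[R]_n) : Prop :=
  posdef (- \sum_i l i ord0 *: A i).

Definition Sed (R : realType) (n : nat) (A : 'I_n -> 'M[R]_n) (l : 'cV[R]_n) : Prop :=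
  posdef (1%:M - \sum_i l i ord0 *: A i).

Definition Llin (R : realType) (n : nat) (A : 'I_n -> 'M[R]_n) (a : 'I_n -> 'cV[R]_n)
  (x l : 'cV[R]_n) : 'cV[R]_n :=
  \sum_i l i ord0 *: (a i + A i *m x).

Definition Led (R : realType) (n : nat) (A : 'I_n -> 'M[R]_n) (a : 'I_n -> 'cV[R]_n)
  (x l : 'cV[R]_n) : 'cV[R]_n :=
  x - \sum_i l i ord0 *: (a i + A i *m x).

Definition Rlin (R : realType) (n : nat) (A : 'I_n -> 'M[R]_n) (a : 'I_n -> 'cV[R]_n)
  (alpha : 'I_n -> R) (u : 'cV[R]_n) : Prop :=
  exists x l, Vf A a alpha x /\ Slin A l /\ u = Llin A a x l.

Definition Red (R : realType) (n : nat) (A : 'I_n -> 'M[R]_n) (a : 'I_n -> 'cV[R]_n)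
  (alpha : 'I_n -> R) (u : 'cV[R]_n) : Prop :=
  exists x l, Vf A a alpha x /\ Sed A l /\ u = Led A a x l.

Definition image_of (R : realType) (n : nat) (S : 'cV[R]_n -> Prop)
  (L : 'cV[R]_n -> 'cV[R]_n) (u : 'cV[R]_n) : Prop :=
  exists l, S l /\ u = L l.

Definition linear_map (R : realType) (n : nat) (L : 'cV[R]_n -> 'cV[R]_n) : Prop :=
  forall (c : R) (v w : 'cV[R]_n), L (c *: v + w) = c *: L v + L w.

Definition affine_map (R : realType) (n : nat) (L : 'cV[R]_n -> 'cV[R]_n) : Prop :=
  linear_map (fun v => L v - L 0).

Definition spectrahedral_cone (R : realType) (n : nat) (P : 'cV[R]_n -> Prop) : Prop :=
  exists (m : nat) (B : 'I_n -> 'M[R]_m),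
    (forall j, (B j \is symmetricmx)) /\
    forall u, P u <-> posdef (\sum_j u j ord0 *: B j).

Definition spectrahedron (R : realType) (n : nat) (P : 'cV[R]_n -> Prop) : Prop :=
  exists (m : nat) (B0 : 'M[R]_m) (B : 'I_n -> 'M[R]_m),
    (B0 \is symmetricmx) /\ (forall j, (B j \is symmetricmx)) /\
    forall u, P u <-> posdef (B0 + \sum_j u j ord0 *: B j).

Definition full_dimensional (R : realType) (n : nat) (P : 'cV[R]_n -> Prop) : Prop :=
  exists (c : 'cV[R]_n) (e : R), 0 < e /\
    forall u : 'cV[R]_n, (forall j, `|u j ord0 - c j ord0| < e) -> P u.

From HB Require Import structures.
From mathcomp Require Import all_boot all_order all_algebra.
From mathcomp Require Import reals.
From mathcomp Require Import complex.
From mathcomp Require Import ring lra.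
Set Implicit Arguments.
Unset Strict Implicit.
Unset Printing Implicit Defensive.
Import Order.TTheory GRing.Theory Num.Theory.
Local Open Scope ring_scope.

(* For real zeros x, z of f and any multipliers l, expanding
   sum_i l_i (f_i z - f_i x) = 0 around x gives
     2 <sum_i l_i (a_i + A_i x), z - x> = - (z - x)^T (sum_i l_i A_i) (z - x).
   Hence if l lies in S^lin (resp. S^ed) and u is the image of l at x, then x is
   the strict minimiser over V_f of <u, .> (resp. of ||. - u||^2), so the pieces
   attached to distinct real points are disjoint.  As f is reduced, the Jacobian
   J_x at a real point is invertible, so l |-> J_x^T l is a linear isomorphism;
   pulling the matrix inequality back through its inverse presents each piece as
   a spectrahedral cone (resp. a spectrahedron).  The latter contains a ball
   around x, the image of the interior point l = 0 of S^ed. *)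

Local Notation dotv p q := ((p^T *m q) ord0 ord0).
Local Notation bform M p q := ((p^T *m M *m q) ord0 ord0).

Section BilinearForms.
Variables (F : fieldType) (n : nat).
Implicit Types (M S : 'M[F]_n) (p q : 'cV[F]_n).

Lemma entryD m k (M N : 'M[F]_(m, k)) i j : (M + N) i j = M i j + N i j.
Proof. by rewrite mxE. Qed.

Lemma entryN m k (M : 'M[F]_(m, k)) i j : (- M) i j = - M i j.
Proof. by rewrite mxE. Qed.

Lemma entryZ m k c (M : 'M[F]_(m, k)) i j : (c *: M) i j = c * M i j.
Proof. by rewrite mxE. Qed.

Lemma entryT m k (M : 'M[F]_(m, k)) i j : M^T j i = M i j.
Proof. by rewrite mxE. Qed.

Definition entryE := (entryD, entryN, entryZ).

Lemma symmetricmxP M : reflect (M^T = M) (M \is symmetricmx).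
Proof.
rewrite is_hermitianmxE expr0 scale1r map_mx_id // eq_sym.
exact: eqP.
Qed.

Lemma dotvC p q : dotv p q = dotv q p.
Proof. by rewrite -entryT trmx_mul trmxK. Qed.

Lemma bformC S p q : S \is symmetricmx -> bform S p q = bform S q p.
Proof.
by move=> /symmetricmxP symS; rewrite -entryT !trmx_mul trmxK symS mulmxA.
Qed.

Lemma dotv_suml (I : finType) (c : I -> F) (w : I -> 'cV[F]_n) q :
  dotv (\sum_i c i *: w i) q = \sum_i c i * dotv (w i) q.
Proof.
rewrite linear_sum mulmx_suml summxE; apply: eq_bigr => i _.
by rewrite linearZ -scalemxAl entryZ.
Qed.

Lemma bform_suml (I : finType) (c : I -> F) (M : I -> 'M[F]_n) p q :
  bform (\sum_i c i *: M i) p q = \sum_i c i * bform (M i) p q.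
Proof.
rewrite mulmx_sumr mulmx_suml summxE; apply: eq_bigr => i _.
by rewrite -scalemxAr -scalemxAl entryZ.
Qed.

Lemma bformN M p q : bform (- M) p q = - bform M p q.
Proof. by rewrite mulmxN mulNmx entryN. Qed.

Lemma bform1B M p q : bform (1%:M - M) p q = dotv p q - bform M p q.
Proof. by rewrite mulmxBr mulmx1 mulmxBl entryD entryN. Qed.

Lemma quad_eval_subr S b c x z : S \is symmetricmx ->
  quad_eval S b c z - quad_eval S b c x =
  bform S (z - x) (z - x) + 2 * dotv (b + S *m x) (z - x).
Proof.
move=> symS; rewrite -[in LHS](subrK x z); move: (z - x) => d.
rewrite /quad_eval !raddfD /= !mulmxDl !entryD (bformC d x symS).
move/symmetricmxP: symS; rewrite trmx_mul => ->; ring.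
Qed.

End BilinearForms.

Section PositiveForms.
Variables (R : realFieldType) (n : nat).
Implicit Types (M : 'M[R]_n) (v : 'cV[R]_n).

Definition entry_abs_sum M := \sum_j \sum_k `|M j k|.

Lemma dotv_sqr v : dotv v v = \sum_j v j ord0 ^+ 2.
Proof. by rewrite mxE; apply: eq_bigr => j _; rewrite mxE expr2. Qed.

Lemma sqr_coord_le_dotv v j : v j ord0 ^+ 2 <= dotv v v.
Proof.
rewrite dotv_sqr (bigD1 j) //= lerDl.
by apply: sumr_ge0 => i _; apply: sqr_ge0.
Qed.

Lemma dotv_gt0 v : v != 0 -> 0 < dotv v v.
Proof.
move=> v_neq0; rewrite lt_def dotv_sqr sumr_ge0 ?andbT; last first.
  by move=> j _; apply: sqr_ge0.
apply: contra v_neq0 => /eqP/psumr_eq0P v0; apply/eqP/matrixP => j k.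
by rewrite ord1 mxE; apply/eqP; rewrite -sqrf_eq0 v0 // => i _; apply: sqr_ge0.
Qed.

Lemma abs_coord_mul_le_dotv v j k : `|v j ord0| * `|v k ord0| <= dotv v v.
Proof.
have := sqr_coord_le_dotv v j; have := sqr_coord_le_dotv v k.
rewrite -[v j _ ^+ 2]real_normK ?num_real // -[v k _ ^+ 2]real_normK ?num_real //.
have := normr_ge0 (v j ord0); have := normr_ge0 (v k ord0).
nra.
Qed.

Lemma abs_bform_le M v : `|bform M v v| <= entry_abs_sum M * dotv v v.
Proof.
rewrite mxE /entry_abs_sum exchange_big /= mulr_suml.
apply: le_trans (ler_norm_sum _ _ _) _; apply: ler_sum => k _.
rewrite mxE !mulr_suml; apply: le_trans (ler_norm_sum _ _ _) _.
apply: ler_sum => j _; rewrite mxE !normrM mulrAC mulrC.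
exact/ler_wpM2l/abs_coord_mul_le_dotv.
Qed.

End PositiveForms.

Section MappedQuadrics.
Variables (K L : comNzRingType) (f : {rmorphism K -> L}) (n : nat).

Lemma quad_eval_map (M : 'M[K]_n) b c x :
  quad_eval (map_mx f M) (map_mx f b) (f c) (map_mx f x) = f (quad_eval M b c x).
Proof.
by rewrite /quad_eval !map_trmx -!map_mxM !mxE !rmorphD rmorphM rmorph_nat.
Qed.

Lemma jacobian_map (A : 'I_n -> 'M[K]_n) (a : 'I_n -> 'cV[K]_n) x :
  jacobian (fun i => map_mx f (A i)) (fun i => map_mx f (a i)) (map_mx f x) =
  map_mx f (jacobian A a x).
Proof.
apply/matrixP => i j; rewrite [LHS]mxE [RHS]mxE [in RHS]mxE -map_mxM.
by rewrite -map_mxD mxE.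
Qed.

End MappedQuadrics.

Section Pieces.
Variables (R : realType) (n : nat).
Implicit Types (S V : 'cV[R]_n -> Prop) (L : 'cV[R]_n -> 'cV[R]_n -> 'cV[R]_n).

Lemma image_ofE S (g h : 'cV[R]_n -> 'cV[R]_n) u :
  cancel g h -> cancel h g -> image_of S g u <-> S (h u).
Proof.
move=> gK hK; split; first by move=> [l [Sl ->]]; rewrite gK.
by move=> Shu; exists (h u); rewrite hK.
Qed.

Lemma region_pieces V S L (pts : seq 'cV[R]_n) :
  (forall x, V x <-> x \in pts) -> forall u,
  (exists x l, V x /\ S l /\ u = L x l) <-> exists2 x, x \in pts & image_of S (L x) u.
Proof.
move=> Vpts u; split.
  by move=> [x [l [/Vpts Vx [Sl ->]]]]; exists x => //; exists l.
by move=> [x /Vpts Vx [l [Sl ->]]]; exists x, l.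
Qed.

Lemma strict_minimizer_pieces_disjoint V S L (cost : 'cV[R]_n -> 'cV[R]_n -> R) :
  (forall x z l, V x -> V z -> z != x -> S l -> cost (L x l) x < cost (L x l) z) ->
  forall x y u, V x -> V y -> x != y -> image_of S (L x) u -> ~ image_of S (L y) u.
Proof.
move=> strict_min x y u Vx Vy xy [l [Sl ->]] [l' [Sl' ul']].
have := strict_min x y l Vx Vy; rewrite eq_sym => /(_ xy Sl).
have := strict_min y x l' Vy Vx xy Sl'; rewrite -ul' => lt_yx /(lt_trans lt_yx).
by rewrite ltxx.
Qed.

End Pieces.

Section QuadricSystem.
Variables (R : realType) (n : nat).
Variables (A : 'I_n -> 'M[R]_n) (a : 'I_n -> 'cV[R]_n) (alpha : 'I_n -> R).
Hypothesis symA : forall i, A i \is symmetricmx.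
Local Notation V := (Vf A a alpha).

Definition pencil (l : 'cV[R]_n) : 'M[R]_n := \sum_i l i ord0 *: A i.

Lemma pencil_sym l : pencil l \is symmetricmx.
Proof.
apply/symmetricmxP; rewrite linear_sum; apply: eq_bigr => i _.
by rewrite linearZ /= (symmetricmxP _ (symA i)).
Qed.

Lemma pencil_1B_sym l : 1%:M - pencil l \is symmetricmx.
Proof.
by apply/symmetricmxP; rewrite linearB /= trmx1 (symmetricmxP _ (pencil_sym l)).
Qed.

Lemma pencilB l l' : pencil (l - l') = pencil l - pencil l'.
Proof. by rewrite /pencil -sumrB; apply: eq_bigr => i _; rewrite !entryE scalerBl. Qed.

Lemma pencil_mulmx (C : 'M[R]_n) u :
  pencil (C *m u) = \sum_j u j ord0 *: pencil (col j C).
Proof.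
rewrite /pencil; under eq_bigr do rewrite mxE scaler_suml.
rewrite exchange_big; apply: eq_bigr => j _; rewrite scaler_sumr.
by apply: eq_bigr => i _; rewrite !mxE scalerA mulrC.
Qed.

Lemma Llin_dotv_sub x z l : V x -> V z ->
  2 * dotv (Llin A a x l) (z - x) = - bform (pencil l) (z - x) (z - x).
Proof.
move=> Vx Vz.
have sum_sub0 : \sum_i l i ord0 *
    (quad_eval (A i) (a i) (alpha i) z - quad_eval (A i) (a i) (alpha i) x) = 0.
  by rewrite big1 // => i _; rewrite Vx Vz subrr mulr0.
apply/eqP; rewrite -subr_eq0 opprK /Llin dotv_suml bform_suml mulr_sumr.
rewrite -big_split /=; apply/eqP; rewrite -[RHS]sum_sub0; apply: eq_bigr => i _.
by rewrite quad_eval_subr //; ring.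
Qed.

Lemma Llin_strict_min x z l : V x -> V z -> z != x -> Slin A l ->
  dotv (Llin A a x l) x < dotv (Llin A a x l) z.
Proof.
move=> Vx Vz zx [_ negS_pos]; have := negS_pos (z - x); rewrite subr_eq0 => /(_ zx).
rewrite bformN -/(pencil l) -(Llin_dotv_sub l Vx Vz).
by rewrite mulmxBr entryD entryN; lra.
Qed.

Lemma Led_strict_min x z l : V x -> V z -> z != x -> Sed A l ->
  dotv (x - Led A a x l) (x - Led A a x l) < dotv (z - Led A a x l) (z - Led A a x l).
Proof.
move=> Vx Vz zx [_ IS_pos]; have := IS_pos (z - x); rewrite subr_eq0 => /(_ zx).
rewrite bform1B -/(pencil l); have := Llin_dotv_sub l Vx Vz.
have -> : x - Led A a x l = Llin A a x l by rewrite subKr.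
have -> : z - Led A a x l = (z - x) + Llin A a x l by rewrite opprB addrA addrAC.
move: (z - x) (Llin A a x l) => d w.
rewrite [(d + w)^T]linearD /= mulmxDl !mulmxDr !entryD (dotvC d w).
lra.
Qed.

Lemma Llin_jacobian x l : Llin A a x l = (jacobian A a x)^T *m l.
Proof.
apply/matrixP => j k; rewrite ord1 summxE !mxE; apply: eq_bigr => i _.
by rewrite !mxE addrC mulrC.
Qed.

Lemma Led_jacobian x l : Led A a x l = x - (jacobian A a x)^T *m l.
Proof. by rewrite -Llin_jacobian. Qed.

Lemma Led_sub0 x l : Led A a x l - Led A a x 0 = - Llin A a x l.
Proof. by rewrite !Led_jacobian mulmx0 subr0 Llin_jacobian addrAC subrr add0r. Qed.

Lemma Llin_linear x : linear_map (Llin A a x).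
Proof. by move=> c v w; rewrite !Llin_jacobian mulmxDr scalemxAr. Qed.

Lemma Led_affine x : affine_map (Led A a x).
Proof. by move=> c v w; rewrite /= !Led_sub0 Llin_linear opprD scalerN. Qed.

Lemma jacobian_unitmx x : complete_intersection A a alpha -> V x ->
  jacobian A a x \in unitmx.
Proof.
move=> [_ detJ] Vx.
have VCx : VfC A a alpha (map_mx (real_complex R) x).
  move=> i; have := quad_eval_map (real_complex R) (A i) (a i) (alpha i) x.
  by rewrite Vx rmorph0.
have := detJ _ VCx; rewrite (jacobian_map (real_complex R)) det_map_mx.
by rewrite fmorph_eq0 unitmxE unitfE.
Qed.

Lemma posdef_1B_pencil (l : 'cV[R]_n) :
  \sum_i `|l i ord0| * entry_abs_sum (A i) < 1 -> posdef (1%:M - pencil l).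
Proof.
move=> small_l; split; first exact: pencil_1B_sym.
move=> v v_neq0; rewrite bform1B.
have s_gt0 := dotv_gt0 v_neq0.
have : bform (pencil l) v v <= (\sum_i `|l i ord0| * entry_abs_sum (A i)) * dotv v v.
  rewrite bform_suml mulr_suml; apply: le_trans (ler_norm _) _.
  apply: le_trans (ler_norm_sum _ _ _) _; apply: ler_sum => i _.
  by rewrite normrM -mulrA; apply/ler_wpM2l/abs_bform_le.
nra.
Qed.

Section PieceAtPoint.
Variable x : 'cV[R]_n.
Hypotheses (CI : complete_intersection A a alpha) (Vx : V x).

Let C := invmx (jacobian A a x)^T.

Let jacobianT_unitmx : (jacobian A a x)^T \in unitmx.
Proof. by rewrite unitmx_tr jacobian_unitmx. Qed.

Lemma LlinK : cancel (Llin A a x) (mulmx C).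
Proof. by move=> l; rewrite Llin_jacobian mulKmx. Qed.

Lemma Llin_invK : cancel (mulmx C) (Llin A a x).
Proof. by move=> u; rewrite Llin_jacobian mulKVmx. Qed.

Lemma LedK : cancel (Led A a x) (fun u => C *m (x - u)).
Proof. by move=> l; rewrite Led_jacobian subKr mulKmx. Qed.

Lemma Led_invK : cancel (fun u => C *m (x - u)) (Led A a x).
Proof. by move=> u; rewrite Led_jacobian mulKVmx // subKr. Qed.

Lemma Llin_bij : bijective (Llin A a x).
Proof. exact: Bijective LlinK Llin_invK. Qed.

Lemma Led_bij : bijective (Led A a x).
Proof. exact: Bijective LedK Led_invK. Qed.

Lemma Llin_image_spectrahedral_cone :
  spectrahedral_cone (image_of (Slin A) (Llin A a x)).
Proof.
exists n, (fun j => - pencil (col j C)); split.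
  by move=> j; apply/symmetricmxP; rewrite linearN /= (symmetricmxP _ (pencil_sym _)).
move=> u; rewrite (image_ofE _ _ LlinK Llin_invK).
have -> : \sum_j u j ord0 *: - pencil (col j C) = - pencil (C *m u).
  by rewrite pencil_mulmx -sumrN; apply: eq_bigr => j _; rewrite scalerN.
by [].
Qed.

Lemma Led_image_spectrahedron : spectrahedron (image_of (Sed A) (Led A a x)).
Proof.
exists n, (1%:M - pencil (C *m x)), (fun j => pencil (col j C)).
split; first exact: pencil_1B_sym.
split; first by move=> j; apply: pencil_sym.
move=> u; rewrite (image_ofE _ _ LedK Led_invK).
have -> : 1%:M - pencil (C *m x) + \sum_j u j ord0 *: pencil (col j C) =
          1%:M - pencil (C *m (x - u)).
  by rewrite mulmxBr pencilB [pencil (C *m u)]pencil_mulmx opprB addrA addrAC.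
by [].
Qed.

Lemma Led_image_full_dimensional : full_dimensional (image_of (Sed A) (Led A a x)).
Proof.
pose K := \sum_i (\sum_m `|C i m|) * entry_abs_sum (A i).
have K_ge0 : 0 <= K.
  by apply: sumr_ge0 => i _; apply: mulr_ge0; do ![apply: sumr_ge0 => ? _].
have K1_gt0 : 0 < K + 1 by rewrite ltr_wpDl.
exists x, (K + 1)^-1; split; first by rewrite invr_gt0.
move=> u u_near_x; rewrite (image_ofE _ _ LedK Led_invK).
apply: posdef_1B_pencil; apply: le_lt_trans (_ : (K + 1)^-1 * K < 1); last first.
  by rewrite mulrC ltr_pdivrMr // mul1r ltrDl.
rewrite /K mulr_sumr; apply: ler_sum => i _; rewrite mulrA (mulrC (K + 1)^-1).
apply: ler_wpM2r; first by do ![apply: sumr_ge0 => ? _].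
rewrite mxE mulr_suml; apply: le_trans (ler_norm_sum _ _ _) _; apply: ler_sum => m _.
by rewrite normrM !entryE distrC; apply/ler_wpM2l/ltW.
Qed.

End PieceAtPoint.

End QuadricSystem.

Theorem corollary4p3 (R : realType) (n : nat) (A : 'I_n -> 'M[R]_n)
  (a : 'I_n -> 'cV[R]_n) (alpha : 'I_n -> R) (k : nat) (pts : seq 'cV[R]_n) :
  (forall i, (A i \is symmetricmx)) ->
  complete_intersection A a alpha ->
  uniq pts -> size pts = k -> (forall x, Vf A a alpha x <-> x \in pts) ->
  (k <= 2 ^ n)%N ->
  (* (a) *)
  ((forall u, Rlin A a alpha u <-> exists2 x, x \in pts & image_of (Slin A) (Llin A a x) u) /\
   (forall x y u, x \in pts -> y \in pts -> x != y ->
       image_of (Slin A) (Llin A a x) u -> ~ image_of (Slin A) (Llin A a y) u) /\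
   (forall x, x \in pts ->
       linear_map (Llin A a x) /\ bijective (Llin A a x) /\
       spectrahedral_cone (image_of (Slin A) (Llin A a x)))) /\
  (* (b) *)
  ((forall u, Red A a alpha u <-> exists2 x, x \in pts & image_of (Sed A) (Led A a x) u) /\
   (forall x y u, x \in pts -> y \in pts -> x != y ->
       image_of (Sed A) (Led A a x) u -> ~ image_of (Sed A) (Led A a y) u) /\
   (forall x, x \in pts ->
       affine_map (Led A a x) /\ bijective (Led A a x) /\
       spectrahedron (image_of (Sed A) (Led A a x)) /\
       full_dimensional (image_of (Sed A) (Led A a x)))).
Proof.
move=> symA CI _ _ Vpts _.
have V_pts x : x \in pts -> Vf A a alpha x by move/Vpts.
split; split; [exact: region_pieces | split | exact: region_pieces | split].
- move=> x y u /V_pts Vx /V_pts Vy.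
  exact: (strict_minimizer_pieces_disjoint (cost := fun u p => dotv u p)
    (Llin_strict_min symA)).
- move=> x /V_pts Vx; split; first exact: Llin_linear.
  split; first exact: (Llin_bij CI Vx).
  exact: (Llin_image_spectrahedral_cone symA CI Vx).
- move=> x y u /V_pts Vx /V_pts Vy.
  exact: (strict_minimizer_pieces_disjoint
    (cost := fun u p => dotv (p - u) (p - u)) (Led_strict_min symA)).
- move=> x /V_pts Vx; split; first exact: Led_affine.
  split; first exact: (Led_bij CI Vx).
  split; first exact: (Led_image_spectrahedron symA CI Vx).
  exact: (Led_image_full_dimensional symA CI Vx).
Qed.
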